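(* Let $r \in \mathbb{Q}_{>0}$ be such that $S_r$ is atomic. Then $\rho(S_r) < \infty$ if and only if $\rho_k(S_r) < \infty$ for every $k \in \mathbb{N}$.
   Context: For $q \in \mathbb{Q}_{>0}$, $\mathsf{n}(q),\mathsf{d}(q)$ are the positive coprime integers with $q = \mathsf{n}(q)/\mathsf{d}(q)$. $S_r$ is the additive submonoid of $(\mathbb{Q}_{\ge 0},+)$ generated by $\{r^n : n \in \mathbb{N}_0\}$; it is atomic exactly when $r=1$ or $\mathsf{n}(r)>1$. $\mathsf{L}(x)$ denotes the set of lengths of factorizations of $x$ into atoms. The elasticity of $x \ne 0$ is $\rho(x) = \sup \mathsf{L}(x)/\inf \mathsf{L}(x)$, and $\rho(S_r) = \sup\{\rho(x) : x \ne 0\}$. For $k \in \mathbb{N}$, $\mathcal{U}_k(S_r)$ is the set of $\ell \in \mathbb{N}$ for which there exist atoms $a_1,\dots,a_k,b_1,\dots,b_\ell$ with $a_1+\dots+a_k = b_1 + \dots + b_\ell$, and $\rho_k(S_r) = \sup \mathcal{U}_k(S_r)$ is the $k$-th local elasticity. *)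

From HB Require Import structures.
From mathcomp Require Import all_boot all_order all_algebra.
Set Implicit Arguments. Unset Strict Implicit. Unset Printing Implicit Defensive.
Import Order.TTheory GRing.Theory Num.Theory.
Local Open Scope ring_scope.

Definition inS (r x : rat) : Prop :=
  exists s : seq nat, x = \sum_(n <- s) r ^+ n.

Definition is_atom (r a : rat) : Prop :=
  inS r a /\ a != 0 /\
  forall b c, inS r b -> inS r c -> a = b + c -> b = 0 \/ c = 0.

Definition atomic (r : rat) : Prop :=
  forall x, inS r x -> x != 0 ->
    exists s : seq rat, (forall a, a \in s -> is_atom r a) /\ x = \sum_(a <- s) a.

Definition in_lengths (r x : rat) (l : nat) : Prop :=
  exists s : seq rat, (forall a, a \in s -> is_atom r a) /\
    size s = l /\ x = \sum_(a <- s) a.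

(* ρ(S_r) < ∞ : there is a finite bound M with sup L(x) <= M * inf L(x)
   for every nonzero x ∈ S_r, i.e. l1 <= M * l2 for all l1, l2 ∈ L(x). *)
Definition elasticity_finite (r : rat) : Prop :=
  exists M : nat, forall x, inS r x -> x != 0 ->
    forall l1 l2, in_lengths r x l1 -> in_lengths r x l2 -> (l1 <= M * l2)%N.

Definition in_Uk (r : rat) (k l : nat) : Prop :=
  (0 < l)%N /\
  exists a b : seq rat,
    (forall x, x \in a -> is_atom r x) /\ (forall x, x \in b -> is_atom r x) /\
    size a = k /\ size b = l /\ \sum_(x <- a) x = \sum_(x <- b) x.

Definition local_elasticity_finite (r : rat) (k : nat) : Prop :=
  exists M : nat, forall l, in_Uk r k l -> (l <= M)%N.

(* Write r = n/d in lowest terms.  If d = 1 the only atom of S_r is 1, so every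
   element has a single factorization length and rho(S_r) = 1.  Otherwise the
   identity n r^e = d r^(e+1) lets one trade n atoms for d atoms.  For r < 1
   (so n < d) the element n = n * r^0 has factorizations through r^(m+1) of
   length at least (d - n) m + d, while a fixed factorization has a fixed
   length k, so rho_k(S_r) is infinite.  For r > 1 (so d < n) the powers r^m
   are atoms by a divisibility argument, and d r^m has factorizations of length
   at least (n - d) m + d, so rho_d(S_r) is infinite.  Conversely rho_k <= k rho. *)
From mathcomp Require Import all_boot all_order all_algebra.
From mathcomp Require Import ring.

Set Implicit Arguments.
Unset Strict Implicit.
Unset Printing Implicit Defensive.

Import Order.TTheory GRing.Theory Num.Theory.
Local Open Scope ring_scope.

Definition atoms (r : rat) (s : seq rat) : Prop := forall a, a \in s -> is_atom r a.

Lemma sumr_nseq (V : nmodType) (I : Type) (F : I -> V) n i :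
  \sum_(j <- nseq n i) F j = F i *+ n.
Proof. by elim: n => [|n IH]; rewrite ?big_nil // big_cons IH mulrS. Qed.

Lemma rat_num_den (r : rat) : 0 < r -> (`|numq r|%N)%:R = r * (`|denq r|%N)%:R.
Proof.
move=> hr; have := numqE r.
by rewrite -[numq r]gtz0_abs ?numq_gt0 // -[denq r]absz_denq.
Qed.

Section Atoms.
Variables (r : rat) (hr : 0 < r).

Lemma sumpow_ge0 (s : seq nat) : 0 <= \sum_(e <- s) r ^+ e.
Proof. by apply: sumr_ge0 => e _; rewrite exprn_ge0 // ltW. Qed.

Lemma exprn_le_sumpow e (s : seq nat) : e \in s -> r ^+ e <= \sum_(f <- s) r ^+ f.
Proof. by move=> es; rewrite (big_rem e es) /= lerDl sumpow_ge0. Qed.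

Lemma atom_gt0 a : is_atom r a -> 0 < a.
Proof. by case=> -[s ->] [a0 _]; rewrite lt_def a0 sumpow_ge0. Qed.

Lemma atoms_cat a b : atoms r a -> atoms r b -> atoms r (a ++ b).
Proof. by move=> Ha Hb x; rewrite mem_cat => /orP[/Ha|/Hb]. Qed.

Lemma sum_atoms_gt0 a : atoms r a -> (0 < size a)%N -> 0 < \sum_(x <- a) x.
Proof.
case: a => // x a Ha _; rewrite big_cons ltr_wpDr ?(atom_gt0 (Ha x (mem_head _ _))) //.
by rewrite big_seq sumr_ge0 // => y ya; rewrite ltW // (atom_gt0 (Ha y _)) // inE ya orbT.
Qed.

Lemma inS_sum_atoms a : atoms r a -> inS r (\sum_(x <- a) x).
Proof.
elim: a => [|x a IH] Ha; first by exists [::]; rewrite !big_nil.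
have [[t Et] _] := Ha x (mem_head _ _).
have [t' Et'] := IH (fun y ya => Ha y (@mem_behead _ (x :: a) y ya)).
by exists (t ++ t'); rewrite big_cons big_cat -Et -Et'.
Qed.

Lemma elasticity_finite_local :
  elasticity_finite r -> forall k, (0 < k)%N -> local_elasticity_finite r k.
Proof.
move=> [M HM] k k0; exists (M * k)%N => l [_ [a [b [Ha [Hb [Sa [Sb Eab]]]]]]].
have a_ne0 : \sum_(x <- a) x != 0 by rewrite gt_eqF // sum_atoms_gt0 ?Sa.
by rewrite -Sa -Sb; apply: (HM _ (inS_sum_atoms Ha) a_ne0); [exists b | exists a].
Qed.

Hypothesis hat : atomic r.

Lemma factorization_size_ge (s : seq nat) : exists b,
  [/\ atoms r b, (size s <= size b)%N & \sum_(e <- s) r ^+ e = \sum_(x <- b) x].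
Proof.
elim: s => [|e s [b [Hb Sb Eb]]]; first by exists [::]; rewrite !big_nil.
have re0 : r ^+ e != 0 by rewrite expf_neq0 // gt_eqF.
have re_in : inS r (r ^+ e) by exists [:: e]; rewrite big_seq1.
have [[|x a] [Ha Ea]] := hat re_in re0.
  by rewrite Ea big_nil eqxx in re0.
exists ((x :: a) ++ b); split; first exact: atoms_cat.
  by rewrite size_cat /= addSn ltnS (leq_trans Sb) ?leq_addl.
by rewrite big_cons big_cat /= Ea Eb.
Qed.

Lemma not_local_elasticity_finite k :
  (forall M, exists a s, [/\ atoms r a, size a = k, (M < size s)%N &
                             \sum_(x <- a) x = \sum_(e <- s) r ^+ e]) ->
  ~ local_elasticity_finite r k.
Proof.
move=> unbounded [M HM]; have [a [s [Ha Sa Ms Eas]]] := unbounded M.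
have [b [Hb Sb Esb]] := factorization_size_ge s.
have Mb := leq_trans Ms Sb.
suff : (size b <= M)%N by rewrite leqNgt Mb.
apply: HM; split; first exact: leq_ltn_trans Mb.
by exists a, b; do 4!split => //; rewrite Eas.
Qed.

End Atoms.

Section Exchange.
Variables (r : rat) (n d : nat).
Hypothesis hnd : n%:R = r * d%:R.

Lemma exchange_pow e : r ^+ e *+ n = r ^+ e.+1 *+ d.
Proof. by rewrite -[LHS]mulr_natr -[RHS]mulr_natr hnd exprS; ring. Qed.

Lemma sumpow_num (le_nd : (n <= d)%N) m : exists s : seq nat,
  size s = ((d - n) * m + d)%N /\ n%:R = \sum_(e <- s) r ^+ e.
Proof.
suff [s [Ss Es]] : exists s : seq nat,
    size s = ((d - n) * m)%N /\ n%:R = \sum_(e <- s) r ^+ e + r ^+ m.+1 *+ d.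
  by exists (s ++ nseq d m.+1); rewrite size_cat size_nseq big_cat sumr_nseq Ss.
elim: m => [|m [s [Ss Es]]].
  by exists [::]; rewrite muln0 big_nil add0r expr1 -[r *+ d]mulr_natr hnd.
exists (nseq (d - n) m.+1 ++ s); rewrite size_cat size_nseq Ss mulnS.
split=> //; rewrite big_cat /= sumr_nseq Es -(exchange_pow m.+1) mulrnBr //; ring.
Qed.

Lemma sumpow_den_pow (le_dn : (d <= n)%N) m : exists s : seq nat,
  size s = ((n - d) * m + d)%N /\ r ^+ m *+ d = \sum_(e <- s) r ^+ e.
Proof.
suff [s [Ss Es]] : exists s : seq nat,
    size s = ((n - d) * m)%N /\ r ^+ m *+ d = \sum_(e <- s) r ^+ e + d%:R.
  exists (s ++ nseq d 0%N); rewrite size_cat size_nseq big_cat sumr_nseq Ss.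
  by rewrite expr0 Es.
elim: m => [|m [s [Ss Es]]]; first by exists [::]; rewrite muln0 big_nil add0r expr0.
exists (nseq (n - d) m ++ s); rewrite size_cat size_nseq Ss mulnS.
split=> //; rewrite big_cat /= sumr_nseq -addrA -Es -(exchange_pow m) mulrnBr //; ring.
Qed.

(* Clearing denominators in r^m = sum r^e turns it into n^m = sum n^e d^(m-e). *)
Lemma dvdn_num_exp m (s : seq nat) : (forall e, e \in s -> e < m)%N ->
  r ^+ m = \sum_(e <- s) r ^+ e -> (d %| n ^ m)%N.
Proof.
move=> s_lt Em.
have -> : (n ^ m = \sum_(e <- s) n ^ e * d ^ (m - e))%N.
  apply/eqP; rewrite -(eqr_nat rat) natr_sum natrX hnd exprMn Em mulr_suml.
  rewrite big_seq [X in _ == X]big_seq; apply/eqP/eq_bigr => e /s_lt e_lt.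
  by rewrite natrM !natrX hnd exprMn -[in LHS](subnKC (ltnW e_lt)) exprD; ring.
by rewrite big_seq dvdn_sum // => e /s_lt e_lt; rewrite dvdn_mull // dvdn_exp // subn_gt0.
Qed.

Lemma pow_is_atom (lt_dn : (d < n)%N) (d2 : (2 <= d)%N) (co_nd : coprime n d) m :
  is_atom r (r ^+ m).
Proof.
have d0 : (0 < d)%N by apply: leq_trans d2.
have r1 : 1 < r.
  by rewrite -(ltr_pM2r (ltr0Sn rat d.-1)) prednK // mul1r -hnd ltr_nat.
have r0 : 0 < r := lt_trans ltr01 r1.
split; first by exists [:: m]; rewrite big_seq1.
split; first by rewrite expf_neq0 // gt_eqF.
move=> _ _ [s1 ->] [s2 ->] Em.
have [b0|b0] := eqVneq (\sum_(e <- s1) r ^+ e) 0; [by left | right].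
have [//|c0] := eqVneq (\sum_(e <- s2) r ^+ e) 0; exfalso.
have lt_m e : e \in s1 ++ s2 -> (e < m)%N.
  rewrite -(ltr_eXn2l r1) Em mem_cat => /orP[] es.
    by apply: le_lt_trans (exprn_le_sumpow r0 es) _; rewrite ltrDl lt_def c0 sumpow_ge0.
  by apply: le_lt_trans (exprn_le_sumpow r0 es) _; rewrite ltrDr lt_def b0 sumpow_ge0.
have /(dvdn_num_exp lt_m) dvd_d : r ^+ m = \sum_(e <- s1 ++ s2) r ^+ e by rewrite big_cat.
have : coprime d (n ^ m) by rewrite coprime_sym coprimeXl.
by rewrite /coprime (gcdn_idPl dvd_d) => /eqP d1; rewrite d1 in d2.
Qed.

End Exchange.

Section Unbounded.
Variables (r : rat) (n d : nat).
Hypotheses (hr : 0 < r) (hat : atomic r) (hnd : n%:R = r * d%:R).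

Lemma local_elasticity_infinite_lt (n0 : (0 < n)%N) (lt_nd : (n < d)%N) :
  exists2 k, (0 < k)%N & ~ local_elasticity_finite r k.
Proof.
have n_in : inS r n%:R by exists (nseq n 0%N); rewrite sumr_nseq expr0.
have n_ne0 : n%:R != 0 :> rat by rewrite pnatr_eq0 -lt0n.
have [a [Ha Ea]] := hat n_in n_ne0.
have a0 : (0 < size a)%N by case: a Ea {Ha} => // E; rewrite E big_nil eqxx in n_ne0.
exists (size a) => //; apply: (not_local_elasticity_finite hr hat) => M.
have [s [Ss Es]] := sumpow_num hnd (ltnW lt_nd) M.
exists a, s; split=> //; last by rewrite -Ea.
by rewrite Ss -addn1 leq_add // ?leq_pmull ?subn_gt0 // (leq_trans n0 (ltnW lt_nd)).
Qed.

Lemma local_elasticity_infinite_gt (d2 : (2 <= d)%N) (lt_dn : (d < n)%N)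
  (co_nd : coprime n d) : exists2 k, (0 < k)%N & ~ local_elasticity_finite r k.
Proof.
have d0 : (0 < d)%N by apply: leq_trans d2.
exists d => //; apply: (not_local_elasticity_finite hr hat) => M.
have [s [Ss Es]] := sumpow_den_pow hnd (ltnW lt_dn) M.
exists (nseq d (r ^+ M)), s; split; rewrite ?size_nseq ?sumr_nseq //.
  by move=> x; rewrite mem_nseq => /andP[_ /eqP->]; apply: pow_is_atom hnd _ _ _ _.
by rewrite Ss -addn1 leq_add // leq_pmull ?subn_gt0.
Qed.

End Unbounded.

Lemma atom_nat_eq1 (n : nat) a : is_atom n%:R a -> a = 1.
Proof.
case=> -[s ->]; rewrite (eq_bigr (fun e => (n ^ e)%:R)) => [|e _]; last by rewrite natrX.
rewrite -natr_sum; set k := (\sum_(e <- s) _)%N.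
move=> [k0 split_k].
have one_in : inS n%:R 1 by exists [:: 0%N]; rewrite big_seq1.
have [k_le1|k_gt1] := leqP k 1%N.
  by apply/eqP; rewrite pnatr_eq1 eqn_leq k_le1 lt0n -(pnatr_eq0 rat).
have pred_in : inS n%:R (k.-1)%:R by exists (nseq k.-1 0%N); rewrite sumr_nseq.
have k_split : k%:R = 1 + (k.-1)%:R :> rat by rewrite addrC natr1 prednK // ltnW.
case: (split_k _ _ one_in pred_in k_split) => /eqP; first by rewrite oner_eq0.
by rewrite pnatr_eq0 -subn1 subn_eq0 leqNgt k_gt1.
Qed.

Lemma elasticity_finite_nat (n : nat) : elasticity_finite n%:R.
Proof.
have sum_atoms b : atoms n%:R b -> \sum_(x <- b) x = (size b)%:R.
  by move=> Hb; rewrite big_seq (eq_bigr _ (fun x xb => atom_nat_eq1 (Hb x xb))) -big_seq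
    big_const_seq count_predT iter_addr_0.
exists 1%N => x _ _ l1 l2 [b1 [Hb1 [<- ->]]] [b2 [Hb2 [<- E]]].
by rewrite mul1n !sum_atoms // in E *; move/eqP: E; rewrite eqr_nat => /eqP->.
Qed.

Theorem corollary4p10 (r : rat) (hr : 0 < r) (hat : atomic r) :
  elasticity_finite r <->
  (forall k : nat, (0 < k)%N -> local_elasticity_finite r k).
Proof.
split; first exact: elasticity_finite_local.
move=> hloc; set n := `|numq r|%N; set d := `|denq r|%N.
have hnd : n%:R = r * d%:R := rat_num_den hr.
have d0 : (0 < d)%N by rewrite -ltz_nat absz_denq denq_gt0.
have n0 : (0 < n)%N by rewrite absz_gt0 numq_eq0 gt_eqF.
have [d1|d_ne1] := eqVneq d 1%N.
  by rewrite -[r]mulr1 -[1]/(1%:R) -d1 -hnd; apply: elasticity_finite_nat.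
have co_nd : coprime n d := coprime_num_den r.
have [lt_nd|lt_dn|eq_nd] := ltngtP n d.
- by have [k k0] := local_elasticity_infinite_lt hr hat hnd n0 lt_nd; case; apply: hloc.
- have d2 : (2 <= d)%N by rewrite ltn_neqAle eq_sym d_ne1.
  by have [k k0] := local_elasticity_infinite_gt hr hat hnd d2 lt_dn co_nd; case; apply: hloc.
- by move: co_nd; rewrite eq_nd /coprime gcdnn => /eqP d1; rewrite d1 eqxx in d_ne1.
Qed.
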